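(* Let $D\ge 1$, $\mu>1$ and $\theta>0$. Let $(V,T)$ be a Galton–Watson tree of depth $D$ (truncated at generation $D$) with root $v_o$ and offspring distribution of mean $\mu$, and let $V_d$ be the set of nodes at depth $d$. Set \[ \rho_d:=\frac{\theta(\mu-1)}{(\theta-1)(\mu-1)+\mu^d-1},\quad d=1,\dots,D-1,\qquad \rho_D:=0. \] Conditionally on the tree, let $\{Z_v, v\in V\setminus\{v_o\}\}$ be independent Bernoulli variables with $\mathbf{E}[Z_v]=\rho_d$ for $v\in V_d$, and assign labels as follows: the root gets label $0$; in order of increasing depth, a node with $Z_v=0$ takes its parent's label, and a node with $Z_v=1$ takes a new label not used before. Then the expected number of distinct labels among all vertices of the tree is \[ K(\mu,D,\theta)=1+\theta(\mu-1)\sum_{d=1}^{D-1}\frac{1}{1+(\theta\mu-\theta-\mu)\mu^{-d}}. \]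
   Context: The number of distinct labels equals $1+\sum_{v\ne v_o}Z_v$. For $\theta>0$, $\mu>1$ the numbers $\rho_d$ lie in $(0,1]$ with $\rho_1=1$. *)

From HB Require Import structures.
From mathcomp Require Import all_boot all_order all_algebra.
From mathcomp Require Import all_classical all_reals all_analysis.
Set Implicit Arguments. Unset Strict Implicit. Unset Printing Implicit Defensive.
Import Order.TTheory GRing.Theory Num.Theory.
Local Open Scope classical_set_scope.
Local Open Scope ring_scope.

(* Ulam-Harris words: the root is [::]; the i-th child (i = 0,1,...) of the
   word u is  i :: u  (so the parent of i :: u is u, and depth = size). *)

Fixpoint gw_gen (xi : seq nat -> nat) (d : nat) : seq (seq nat) :=
  match d with
  | 0 => [:: [::]]
  | d'.+1 => flatten [seq [seq i :: u | i <- iota 0 (xi u)] | u <- gw_gen xi d']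
  end.

Definition gw_vertices (xi : seq nat -> nat) (D : nat) : seq (seq nat) :=
  flatten [seq gw_gen xi d | d <- iota 0 D.+1].

(* Labelling: the root has label None (= "0"); a non-root vertex v with
   Z v = true receives the fresh label Some v (never used before), and a
   vertex with Z v = false inherits the label of its parent. *)
Fixpoint gw_label (Z : seq nat -> bool) (u : seq nat) : option (seq nat) :=
  match u with
  | [::] => None
  | _ :: u' => if Z u then Some u else gw_label Z u'
  end.

Definition gw_nlabels (xi : seq nat -> nat) (Z : seq nat -> bool) (D : nat) : nat :=
  size (undup [seq gw_label Z v | v <- gw_vertices xi D]).

Definition gw_rho {R : realType} (mu theta : R) (D d : nat) : R :=
  if d == D then 0
  else theta * (mu - 1) / ((theta - 1) * (mu - 1) + mu ^+ d - 1).

Definition gw_K {R : realType} (mu : R) (D : nat) (theta : R) : R :=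
  1 + theta * (mu - 1) *
      \sum_(1 <= d < D) (1 + (theta * mu - theta - mu) * mu ^- d)^-1.

Definition indep_nat_family {R : realType} {dT : measure_display}
  {T : measurableType dT} (P : probability T R) (I : eqType)
  (X : I -> T -> nat) : Prop :=
  forall (s : seq I) (f : I -> nat), uniq s ->
    P [set w | forall i, i \in s -> X i w = f i] =
    (\prod_(i <- s) P [set w | X i w = f i])%E.

From HB Require Import structures.
From mathcomp Require Import all_boot all_order all_algebra.
From mathcomp Require Import all_classical all_reals all_analysis.
From mathcomp Require Import measurable_realfun ring.
Set Implicit Arguments.
Unset Strict Implicit.
Unset Printing Implicit Defensive.
Import Order.TTheory GRing.Theory Num.Theory.
Local Open Scope classical_set_scope.
Local Open Scope ring_scope.

(* The labels in use are 0 and the non-root vertices v with Z_v = 1, so the number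
   of labels is 1 + sum_(d = 1..D) #{v in V_d | Z_v = 1}.  With vertices encoded as
   Ulam-Harris words, v = i :: u lies in the tree iff i < xi_u and u lies in the tree,
   an event on offspring numbers of strict prefixes of v only; by independence
   P(v in tree, Z_v = 1) = rho_d P(v in tree), and summing over all words of length d
   (an iterated series, exchanged with the expectation by monotone convergence) the
   tail-sum formula sum_i P(xi > i) = mu at each generation gives
   E #{v in V_d | Z_v = 1} = rho_d mu^d.  Finally rho_D = 0 and
   rho_d mu^d = theta (mu - 1) / (1 + (theta mu - theta - mu) mu^-d). *)

Section GaltonWatsonTree.
Variable xi : seq nat -> nat.

Fixpoint gw_tree (v : seq nat) : bool :=
  if v is i :: u then (i < xi u)%N && gw_tree u else true.

Lemma mem_gw_gen d v : (v \in gw_gen xi d) = (size v == d) && gw_tree v.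
Proof.
elim: d v => [|d IH] v; first by case: v => [|i u]; rewrite inE.
apply/flatten_mapP/idP => [[u ugen /mapP[i]]|].
  rewrite mem_iota => /andP[_ iu] ->; move: ugen; rewrite IH => /andP[/eqP <- treeu].
  by rewrite /= iu treeu eqxx.
case: v => [|i u] //= /andP[sizeu /andP[iu treeu]].
by exists u; [rewrite IH -eqSS sizeu | apply/mapP; exists i; rewrite ?mem_iota].
Qed.

Lemma gw_gen_uniq d : uniq (gw_gen xi d).
Proof.
elim: d => [|d IH] //=.
apply: (@allpairs_uniq_dep _ (fun=> nat) _ (fun u i => i :: u)) => //.
  by move=> u _; apply: iota_uniq.
by move=> [u i] [u' i'] _ _ /= [-> ->].
Qed.

Lemma mem_gw_vertices D v :
  (v \in gw_vertices xi D) = (size v <= D)%N && gw_tree v.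
Proof.
apply/flatten_mapP/andP => [[d]|[sizev treev]].
  by rewrite mem_iota mem_gw_gen => /andP[_ dD] /andP[/eqP -> ->].
by exists (size v); rewrite ?mem_iota ?mem_gw_gen ?eqxx.
Qed.

Lemma gw_vertices_uniq D : uniq (gw_vertices xi D).
Proof.
rewrite /gw_vertices; elim: (iota 0 D.+1) (iota_uniq 0 D.+1) => //= d ds IH.
case/andP=> dds udds; rewrite cat_uniq gw_gen_uniq IH // andbT.
apply/hasPn => v /flatten_mapP[e eds]; rewrite !mem_gw_gen => /andP[/eqP -> _].
by apply: contraNN dds => /andP[/eqP <- _].
Qed.

Variable Z : seq nat -> bool.

Lemma gw_label_cases v : gw_tree v ->
  gw_label Z v = None \/
  exists2 u, gw_label Z v = Some u &
    [/\ u != [::], Z u, gw_tree u & (size u <= size v)%N].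
Proof.
elim: v => [|i u IH] /=; first by left.
case/andP=> iu treeu; case: ifP => Zv; first by right; exists (i :: u); rewrite //= iu.
case: (IH treeu) => [->|[w -> [? ? ? ?]]]; [by left|right; exists w => //].
by split=> //; apply: leqW.
Qed.

Lemma gw_nlabelsE D :
  gw_nlabels xi Z D = (\sum_(1 <= d < D.+1) count Z (gw_gen xi d)).+1.
Proof.
pose marked := [seq v <- gw_vertices xi D | (v != [::]) && Z v].
have labelsE : perm_eq (undup [seq gw_label Z v | v <- gw_vertices xi D])
                       (None :: map Some marked).
  apply: uniq_perm; rewrite ?undup_uniq //.
    rewrite /= map_inj_uniq => [|? ? [] //].
    by rewrite filter_uniq ?gw_vertices_uniq // andbT; apply/mapP => -[].
  move=> l; rewrite mem_undup [in RHS]in_cons; apply/mapP/orP => [[v]|[/eqP ->|/mapP[u]]].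
  - rewrite mem_gw_vertices => /andP[vD treev] ->.
    case: (gw_label_cases treev) => [->|[u -> [u0 Zu treeu uv]]]; [by left|right].
    by apply: map_f; rewrite mem_filter u0 Zu mem_gw_vertices treeu (leq_trans uv).
  - by exists [::]; rewrite ?mem_gw_vertices.
  rewrite mem_filter => /andP[/andP[u0 Zu] uD] ->; exists u => //.
  by case: u u0 Zu {uD} => //= i u _ ->.
rewrite /gw_nlabels (perm_size labelsE) /= size_map size_filter count_flatten.
rewrite -map_comp sumnE big_map -/(index_iota 0 D.+1) big_ltn //= add0n; congr _.+1.
apply: eq_big_nat => d /andP[d0 _]; apply: eq_in_count => v.
by rewrite mem_gw_gen => /andP[/eqP vd _]; case: v vd d0 => [<-|].
Qed.

End GaltonWatsonTree.

Section SumWords.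
Context {R : realType}.
Local Open Scope ereal_scope.

Fixpoint sum_words (d : nat) (f : seq nat -> \bar R) : \bar R :=
  if d is d'.+1 then sum_words d' (fun u => \sum_(i <oo) f (i :: u)) else f [::].

Lemma eq_sum_words d f g :
  (forall v, size v = d -> f v = g v) -> sum_words d f = sum_words d g.
Proof.
elim: d f g => [|d IH] f g fg /=; first exact: fg.
by apply: IH => u sizeu; apply: eq_eseriesr => i _; apply: fg; rewrite /= sizeu.
Qed.

Lemma sum_wordsZl d (c : R) f : (forall v, 0 <= f v) ->
  sum_words d (fun v => c%:E * f v) = c%:E * sum_words d f.
Proof.
elim: d f => [|d IH] f f0 //=.
rewrite -IH => [|u]; last exact: nneseries_ge0.
by apply: eq_sum_words => u _; rewrite nneseriesZl.
Qed.

Lemma nneseries_ltn n (a : nat -> \bar R) : (forall i, 0 <= a i) ->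
  \sum_(i <oo | (i < n)%N) a i = \sum_(0 <= i < n) a i.
Proof.
move=> a0; rewrite eseries_mkcond (nneseries_split 0 n) => [|k _]; last by case: ifP.
rewrite add0n eseries0 ?adde0 => [|i ni _]; last by rewrite ltnNge ni.
by rewrite big_mkord [RHS]big_mkord; apply: eq_bigr => i _; rewrite ltn_ord.
Qed.

Lemma sum_words_gw_gen (xi : seq nat -> nat) d f : (forall v, 0 <= f v) ->
  sum_words d (fun v => if gw_tree xi v then f v else 0) = \sum_(v <- gw_gen xi d) f v.
Proof.
elim: d f => [|d IH] f f0 /=; first by rewrite big_seq1.
rewrite (@eq_sum_words d _ (fun u => if gw_tree xi u then
                                       \sum_(0 <= i < xi u) f (i :: u) else 0)).
  rewrite IH => [|u]; last exact: sume_ge0.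
  rewrite big_flatten /= big_map; apply: eq_bigr => u _.
  by rewrite big_map /index_iota subn0.
move=> u _; rewrite -nneseries_ltn //; case: (gw_tree xi u).
  by rewrite [RHS]eseries_mkcond; apply: eq_eseriesr => i _; rewrite andbT.
by rewrite eseries0 // => i _ _; rewrite andbF.
Qed.

End SumWords.

Section NatValued.
Context (R : realType) (dT : measure_display) (T : measurableType dT).
Variables (Y : T -> nat) (S : set nat).

Lemma preimage_nat_bigcup : [set w | S (Y w)] = \bigcup_(k in S) [set w | Y w = k].
Proof.
by apply/seteqP; split=> [w Sw|w [k Sk Yk]]; [exists (Y w)|rewrite /= -Yk in Sk].
Qed.

Hypothesis mY : forall k, measurable [set w | Y w = k].

Lemma measurable_preimage_nat : measurable [set w | S (Y w)].
Proof. by rewrite preimage_nat_bigcup; apply: bigcup_measurable. Qed.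

Lemma measure_preimage_nat (mu : {measure set T -> \bar R}) :
  mu [set w | S (Y w)] = (\sum_(k <oo | k \in S) mu [set w | Y w = k])%E.
Proof.
by rewrite preimage_nat_bigcup measure_bigcup // => k k' _ _ [w [/= -> ->]].
Qed.

End NatValued.

Section IndependentFamily.
Context (R : realType) (dT : measure_display) (T : measurableType dT).
Variable P : probability T R.
Variables (I : eqType) (X : I -> T -> nat).
Hypothesis mX : forall i k, measurable [set w | X i w = k].
Hypothesis indX : indep_nat_family P X.
Local Open Scope ereal_scope.

Definition point_event (s : seq I) (f : I -> nat) : set T :=
  [set w | forall i, i \in s -> X i w = f i].

Fixpoint joint_event (L : seq (I * set nat)) : set T :=
  if L is (i, A) :: L' then [set w | A (X i w)] `&` joint_event L' else setT.

Lemma measurable_point_event s f : measurable (point_event s f).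
Proof.
elim: s => [|j s IH].
  by rewrite (_ : point_event _ _ = setT) //; apply/seteqP; split.
rewrite (_ : point_event _ _ = [set w | X j w = f j] `&` point_event s f).
  exact: measurableI.
apply/seteqP; split=> [w fw|w [fjw fw] i].
  by split=> [|i si]; apply: fw; rewrite inE ?eqxx ?si ?orbT.
by rewrite inE => /predU1P[->|/fw].
Qed.

Lemma measurable_joint_event L : measurable (joint_event L).
Proof.
elim: L => [|[i A] L IH] //=; apply: measurableI => //.
exact: measurable_preimage_nat.
Qed.

Lemma point_event_cons j s f k : j \notin s ->
  point_event (j :: s) (fun i => if i == j then k else f i) =
  [set w | X j w = k] `&` point_event s f.
Proof.
move=> js; have fE i : i \in s -> (if i == j then k else f i) = f i.
  by move=> si; case: eqP si js => // -> ->.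
apply/seteqP; split=> [w fw|w [/= wk fw] i].
  split; first by have := fw j; rewrite inE eqxx => /(_ isT).
  by move=> i si; rewrite -fE // fw // inE si orbT.
by rewrite inE => /predU1P[->|si] /=; [rewrite eqxx|rewrite fE //; apply: fw].
Qed.

(* Induction on L: the first set condition [X j \in A] is the countable disjoint
   union over k \in A of the point conditions [X j = k]. *)
Lemma probability_point_joint_event L s f : uniq (s ++ map fst L) ->
  P (point_event s f `&` joint_event L) =
  (\prod_(i <- s) P [set w | X i w = f i]) * \prod_(p <- L) P [set w | p.2 (X p.1 w)].
Proof.
elim: L s f => [|[j A] L IH] s f.
  by rewrite cats0 setIT big_nil mule1; apply: indX.
move=> /= uniq_sjL.
have uniq_js : uniq ((j :: s) ++ map fst L).
  by rewrite -(uniq_catCA s [:: j]).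
have js : j \notin s by case/andP: uniq_js; rewrite mem_cat negb_or => /andP[].
have fE k : \prod_(i <- s) P [set w | X i w = if i == j then k else f i] =
             \prod_(i <- s) P [set w | X i w = f i].
  by apply: eq_big_seq => i si; case: eqP si js => // -> ->.
set C := (\prod_(i <- s) P [set w | X i w = f i]) *
         \prod_(p <- L) P [set w | p.2 (X p.1 w)].
have C_fin : C \is a fin_num.
  by rewrite fin_numM // prode_fin_num // => [i|[i A']] _; rewrite fin_num_measure //;
    apply: measurable_preimage_nat.
rewrite setICA preimage_nat_bigcup setI_bigcupl measure_bigcup; last 2 first.
- by move=> k _; rewrite setIA -point_event_cons //; apply: measurableI;
    [exact: measurable_point_event|exact: measurable_joint_event].
- by move=> k k' _ _ [w [[/= <- _] [/= <- _]]].
transitivity (\sum_(k <oo | k \in A) ((fine C)%:E * P [set w | X j w = k])).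
  apply: eq_eseriesr => k _; rewrite setIA -point_event_cons //.
  by apply: eq_trans (IH _ _ uniq_js) _; rewrite big_cons eqxx fE fineK // -muleA muleC.
rewrite nneseriesZl // -measure_preimage_nat // fineK // big_cons /C /=.
by rewrite -muleA [_ * P _]muleC.
Qed.

Lemma probability_joint_event L : uniq (map fst L) ->
  P (joint_event L) = \prod_(p <- L) P [set w | p.2 (X p.1 w)].
Proof.
move=> uL; have := @probability_point_joint_event L [::] (fun=> 0%N) uL.
rewrite big_nil mul1e => <-; congr (P _).
by rewrite (_ : point_event _ _ = setT) ?setTI //; apply/seteqP; split.
Qed.

End IndependentFamily.

Section SumWordsIntegral.
Context (R : realType) (dT : measure_display) (T : measurableType dT).
Variable mu : {measure set T -> \bar R}.
Variable g : seq nat -> T -> \bar R.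
Hypothesis g_ge0 : forall v w, (0 <= g v w)%E.
Hypothesis mg : forall v, measurable_fun setT (g v).
Local Open Scope ereal_scope.

Lemma measurable_sum_words d : measurable_fun setT (fun w => sum_words d (g^~ w)).
Proof.
elim: d g g_ge0 mg => [|d IH] h h0 mh //=.
apply: (IH (fun u w => \sum_(i <oo) h (i :: u) w)) => [u w|u].
  exact: nneseries_ge0.
by apply: ge0_emeasurable_sum => // k x _ _.
Qed.

Lemma integral_sum_words d :
  \int[mu]_w sum_words d (g^~ w) = sum_words d (fun v => \int[mu]_w g v w).
Proof.
elim: d g g_ge0 mg => [|d IH] h h0 mh //=.
rewrite (IH (fun u w => \sum_(i <oo) h (i :: u) w)) => [|u w|u].
- by apply: eq_sum_words => u _; rewrite integral_nneseries.
- exact: nneseries_ge0.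
- by apply: ge0_emeasurable_sum => // k x _ _.
Qed.

End SumWordsIntegral.

Section GaltonWatsonExpectation.
Context (R : realType) (dT : measure_display) (T : measurableType dT).
Variable P : probability T R.
Variables (D : nat) (mu theta : R) (p : nat -> R).
Variables (xi : seq nat -> T -> nat) (Z : seq nat -> T -> bool).
Hypothesis mxi : forall u k, measurable [set w | xi u w = k].
Hypothesis mZ : forall u, measurable [set w | Z u w].
Hypothesis xi_law : forall u k, P [set w | xi u w = k] = (p k)%:E.
Hypothesis xi_mean : (\sum_(k <oo) ((k%:R * p k)%:E))%E = mu%:E.
Hypothesis Z_law : forall u, (1 <= size u <= D)%N ->
  P [set w | Z u w] = (gw_rho mu theta D (size u))%:E.

Definition gw_family (i : seq nat + seq nat) : T -> nat :=
  match i with inl u => xi u | inr u => fun w => nat_of_bool (Z u w) end.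

Hypothesis gw_indep : indep_nat_family P gw_family.

Local Open Scope ereal_scope.

Lemma measurable_gw_family i k : measurable [set w | gw_family i w = k].
Proof.
case: i => [u|u] /=; first exact: mxi.
case: k => [|[|k]].
- rewrite (_ : [set w | _] = ~` [set w | Z u w]); first exact: measurableC.
  by apply/seteqP; split=> w /=; case: (Z u w).
- rewrite (_ : [set w | _] = [set w | Z u w]) //.
  by apply/seteqP; split=> w /=; case: (Z u w).
- rewrite (_ : [set w | _] = set0) //.
  by apply/seteqP; split=> w /=; case: (Z u w).
Qed.

Fixpoint gw_tree_conditions (v : seq nat) : seq ((seq nat + seq nat) * set nat) :=
  if v is i :: u then (inl u, [set k | (i < k)%N]) :: gw_tree_conditions u else [::].

Let tree_event v := [set w | gw_tree (xi^~ w) v].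
Let marked_event v := [set w | gw_tree (xi^~ w) v && Z v w].
Let probability_gw_joint_event := probability_joint_event measurable_gw_family gw_indep.

Lemma gw_tree_conditionsE v : joint_event gw_family (gw_tree_conditions v) = tree_event v.
Proof.
elim: v => [|i u IH] /=; first by apply/seteqP; split.
by rewrite IH /tree_event; apply/seteqP; split=> w /= /andP.
Qed.

Lemma mem_gw_tree_conditions v x : x \in map fst (gw_tree_conditions v) ->
  if x is inl u then (size u < size v)%N else false.
Proof.
elim: v x => [|i u IH] x //=; rewrite inE => /predU1P[->|/IH] //.
by case: x => // u'; apply: ltnW.
Qed.

Lemma uniq_gw_tree_conditions v : uniq (map fst (gw_tree_conditions v)).
Proof.
elim: v => [|i u IH] //=; rewrite IH andbT.
by apply/negP => /mem_gw_tree_conditions; rewrite ltnn.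
Qed.

Lemma measurable_gw_tree v : measurable (tree_event v).
Proof.
rewrite -gw_tree_conditionsE; apply: measurable_joint_event; exact: measurable_gw_family.
Qed.

Lemma probability_gw_tree_cons i u :
  P (tree_event (i :: u)) = P [set w | (i < xi u w)%N] * P (tree_event u).
Proof.
rewrite -!gw_tree_conditionsE.
by rewrite !probability_gw_joint_event ?uniq_gw_tree_conditions // big_cons.
Qed.

Lemma probability_gw_tree_marked v :
  P (marked_event v) = P [set w | Z v w] * P (tree_event v).
Proof.
have -> : marked_event v =
    joint_event gw_family ((inr v, [set 1%N]) :: gw_tree_conditions v).
  rewrite /= gw_tree_conditionsE /marked_event /tree_event.
  by apply/seteqP; split=> w /=; case: (Z v w); rewrite ?andbT ?andbF // => -[].
rewrite probability_gw_joint_event /=; last first.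
  by rewrite uniq_gw_tree_conditions andbT; apply/negP => /mem_gw_tree_conditions.
rewrite big_cons -probability_gw_joint_event ?uniq_gw_tree_conditions //.
rewrite gw_tree_conditionsE; congr (P _ * _).
by apply/seteqP; split=> w /=; case: (Z v w).
Qed.

Lemma offspring_law_ge0 k : (0 <= p k)%R.
Proof. by rewrite -lee_fin -(xi_law [::]). Qed.

Lemma sum_probability_offspring_gt u : \sum_(i <oo) P [set w | (i < xi u w)%N] = mu%:E.
Proof.
transitivity (\sum_(i <oo) \sum_(k <oo) (if (i < k)%N then (p k)%:E else 0)).
  apply: eq_eseriesr => i _.
  rewrite (measure_preimage_nat [set k | (i < k)%N] (mxi u) P) eseries_mkcond.
  apply: eq_eseriesr => k _; case: ifPn => [/set_mem -> | /negP ik].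
    exact: xi_law.
  by case: ifP => // /mem_set.
rewrite nneseries_interchange => [|i k]; last first.
  by case: ifP; rewrite // lee_fin offspring_law_ge0.
rewrite -xi_mean; apply: eq_eseriesr => k _; rewrite -eseries_mkcond nneseries_ltn.
  by rewrite sumEFin sumr_const_nat subn0 mulr_natl.
by move=> _; rewrite lee_fin offspring_law_ge0.
Qed.

Lemma sum_words_probability_gw_tree d :
  sum_words d (fun v => P (tree_event v)) = (mu ^+ d)%:E.
Proof.
elim: d => [|d IH] /=.
  by rewrite (_ : tree_event _ = setT) ?probability_setT //; apply/seteqP; split.
rewrite (@eq_sum_words _ d _ (fun u => mu%:E * P (tree_event u))) => [|u _].
  by rewrite sum_wordsZl // IH -EFinM exprS.
have tree_fin : P (tree_event u) \is a fin_num.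
  by apply: fin_num_measure; apply: measurable_gw_tree.
transitivity (\sum_(i <oo) ((fine (P (tree_event u)))%:E * P [set w | (i < xi u w)%N])).
  by apply: eq_eseriesr => i _; rewrite probability_gw_tree_cons fineK // muleC.
by rewrite nneseriesZl // sum_probability_offspring_gt fineK // muleC.
Qed.

Lemma measurable_gw_tree_marked v : measurable (marked_event v).
Proof.
rewrite (_ : marked_event v = tree_event v `&` [set w | Z v w]).
  by apply: measurableI; [exact: measurable_gw_tree|exact: mZ].
by rewrite /marked_event /tree_event; apply/seteqP; split=> w /= => [/andP|[-> ->]].
Qed.

Lemma count_marked_sum_words w d :
  ((count (Z^~ w) (gw_gen (xi^~ w) d))%:R)%:E =
  sum_words d (fun v => (\1_(marked_event v) w : R)%:E).
Proof.
have -> : (fun v => (\1_(marked_event v) w : R)%:E) =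
          (fun v => if gw_tree (xi^~ w) v then ((Z v w)%:R)%:E else 0).
  apply/funext => v; rewrite indicE.
  have -> : (w \in marked_event v) = gw_tree (xi^~ w) v && Z v w.
    by apply/idP/idP => [/set_mem|/mem_set].
  by case: gw_tree.
rewrite sum_words_gw_gen => [|v]; last by rewrite lee_fin.
by elim: (gw_gen _ d) => [|v s IH]; rewrite ?big_nil ?big_cons //= natrD EFinD IH.
Qed.

Lemma expected_count_marked d : (1 <= d <= D)%N ->
  \int[P]_w ((count (Z^~ w) (gw_gen (xi^~ w) d))%:R)%:E =
  (gw_rho mu theta D d * mu ^+ d)%:E.
Proof.
move=> dD; under eq_integral do rewrite count_marked_sum_words.
rewrite integral_sum_words => [|v w|v]; first last.
- by apply/measurable_EFinP; apply: measurable_indic; apply: measurable_gw_tree_marked.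
- by rewrite lee_fin indicE.
rewrite (@eq_sum_words _ d _ (fun v => (gw_rho mu theta D d)%:E * P (tree_event v))).
  by rewrite sum_wordsZl // sum_words_probability_gw_tree EFinM.
move=> v sizev; rewrite integral_indic ?setIT //; last exact: measurable_gw_tree_marked.
by rewrite -[LHS]/(P (marked_event v)) probability_gw_tree_marked Z_law sizev.
Qed.

Lemma measurable_count_marked d :
  measurable_fun setT (fun w => ((count (Z^~ w) (gw_gen (xi^~ w) d))%:R)%:E : \bar R).
Proof.
under eq_fun do rewrite count_marked_sum_words.
apply: measurable_sum_words => [v w|v]; first by rewrite lee_fin indicE.
by apply/measurable_EFinP; apply: measurable_indic; apply: measurable_gw_tree_marked.
Qed.

Lemma expectation_gw_nlabels :
  'E_P[fun w => (gw_nlabels (xi^~ w) (Z^~ w) D)%:R] =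
  (1 + \sum_(1 <= d < D.+1) gw_rho mu theta D d * mu ^+ d)%:E.
Proof.
rewrite unlock; under eq_integral do
  rewrite gw_nlabelsE -addn1 natrD EFinD natr_sum -sumEFin addeC.
rewrite ge0_integralD //; last 2 first.
- by move=> w _; apply: sume_ge0 => d _; rewrite lee_fin.
- by apply: emeasurable_sum => d; apply: measurable_count_marked.
have PT : (P : {measure set T -> \bar R}) setT = 1 := probability_setT P.
rewrite integral_cst // PT mul1e ge0_integral_sum //; last exact: measurable_count_marked.
rewrite EFinD -sumEFin; congr (_ + _); apply: eq_big_nat => d dD.
by rewrite expected_count_marked.
Qed.

End GaltonWatsonExpectation.

Lemma gw_KE (R : realType) (mu theta : R) (D : nat) : mu != 0 ->
  gw_K mu D theta = 1 + \sum_(1 <= d < D.+1) gw_rho mu theta D d * mu ^+ d.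
Proof.
move=> mu0; rewrite /gw_K; congr (1 + _).
case: D => [|D]; first by rewrite !big_geq ?mulr0.
rewrite [RHS]big_nat_recr //= /gw_rho eqxx mul0r addr0 mulr_sumr.
apply: eq_big_nat => d /andP[_ dD]; rewrite ltn_eqF //.
have mud0 : mu ^+ d != 0 by rewrite expf_neq0.
set m := mu ^+ d; set c := theta * mu - theta - mu.
have -> : (theta - 1) * (mu - 1) + m - 1 = m + c by rewrite /c; ring.
have -> : 1 + c * m^-1 = (m + c) / m by field.
by rewrite invf_div; ring.
Qed.

Theorem lemma8p1 (R : realType) (dT : measure_display) (T : measurableType dT)
  (P : probability T R) (D : nat) (mu theta : R) (p : nat -> R)
  (xi : seq nat -> T -> nat) (Z : seq nat -> T -> bool) :
  (1 <= D)%N -> 1 < mu -> 0 < theta ->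
  (* measurability of the basic events *)
  (forall u k, measurable [set w | xi u w = k]) ->
  (forall u, measurable [set w | Z u w]) ->
  (* offspring numbers have law p, of mean mu *)
  (forall u k, P [set w | xi u w = k] = (p k)%:E) ->
  (\sum_(k <oo) ((k%:R * p k)%:E))%E = mu%:E ->
  (* Z_v is Bernoulli(rho_d) for v at depth d in 1..D *)
  (forall u, (1 <= size u <= D)%N ->
     P [set w | Z u w] = (gw_rho mu theta D (size u))%:E) ->
  (* all offspring numbers and all Z's are mutually independent *)
  indep_nat_family P
    (fun i : seq nat + seq nat => match i with
       | inl u => xi u
       | inr u => fun w => nat_of_bool (Z u w) end) ->
  ('E_P[fun w => (gw_nlabels (fun u => xi u w) (fun u => Z u w) D)%:R])%E
    = (gw_K mu D theta)%:E.
Proof.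
move=> _ mu_gt1 _ mxi mZ xi_law xi_mean Z_law gw_indep.
rewrite (expectation_gw_nlabels mxi mZ xi_law xi_mean Z_law gw_indep) gw_KE //.
by rewrite gt_eqF // (lt_trans ltr01 mu_gt1).
Qed.
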